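(* Let $G$ be a simple graph with at least one edge, with maximum degree $\Delta(G)$, number of edges $|E(G)|$, and matching number $\nu(G)$, and let $r\ge1$. Then the PIR capacity of the $r$-multigraph $G^{(r)}$ satisfies $$\mathscr{C}\left(G^{(r)}\right)\ \le\ \min\left(\frac{\Delta(G)}{|E(G)|},\ \frac{1}{\nu(G)}\right)\cdot \frac{1}{2-2^{1-r}}.$$
   Context: Multigraph-based PIR model. There are $N$ non-colluding servers $S_1,\dots,S_N$. Let $G$ be a simple graph on vertex set $\{S_1,\dots,S_N\}$ with $K'$ edges, and let $G^{(r)}$ denote the $r$-multigraph obtained by replacing every edge of $G$ by $r$ parallel edges. There are $K=rK'$ files $W_{s,t}$, $(s,t)\in[K']\times[r]$, each chosen independently and uniformly from $\mathbb{F}_2^{L}$; the files $W_{s,1},\dots,W_{s,r}$ are stored exactly on the two endpoints of the $s$-th edge of $G$. Let $\mathcal{W}$ be the set of all files and $\mathcal{W}_{S_i}$ the set of files stored on $S_i$. In a PIR scheme, a user privately chooses a desired index $\theta$ and generates queries $Q_1,\dots,Q_N$ independent of all files; server $S_i$ returns an answer $A_i$ that is a deterministic function of $Q_i$ and $\mathcal{W}_{S_i}$. Reliability: $H(W_\theta\mid A_1,\dots,A_N,Q_1,\dots,Q_N)=0$. Privacy: for every $i$ and every $\theta$, the distribution of $(Q_i^{(\theta)},A_i^{(\theta)},\mathcal{W}_{S_i})$ does not depend on $\theta$. The rate of a scheme is $L/\sum_{i=1}^N H(A_i)$, and $\mathscr{C}(G^{(r)})$ is the supremum of rates over all schemes,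 with $L$ arbitrarily large. A matching of $G$ is a set of pairwise vertex-disjoint edges; $\nu(G)$ is the maximum size of a matching. *)

From HB Require Import structures.
From mathcomp Require Import all_boot all_order all_algebra.
From mathcomp Require Import classical_sets reals ereal exp.
Set Implicit Arguments. Unset Strict Implicit. Unset Printing Implicit Defensive.
Import Order.TTheory GRing.Theory Num.Theory.
Local Open Scope ring_scope.

Definition pmf {R : realType} {Om T : finType} (P : Om -> R) (X : Om -> T) (t : T) : R :=
  \sum_(o | X o == t) P o.

Definition log2 {R : realType} (x : R) : R := ln x / ln 2.

Definition entropy {R : realType} {Om T : finType} (P : Om -> R) (X : Om -> T) : R :=
  - \sum_(t : T) (if pmf P X t == 0 then 0 else pmf P X t * log2 (pmf P X t)).

Definition cond_entropy {R : realType} {Om T T' : finType} (P : Om -> R)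
  (X : Om -> T) (Y : Om -> T') : R :=
  entropy P (fun o => (X o, Y o)) - entropy P Y.

(* A graph on vertex set 'I_N with K' edges, the s-th edge having endpoint set ends s. *)
Definition simple_graph (N K' : nat) (ends : 'I_K' -> {set 'I_N}) : Prop :=
  (forall s, #|ends s| = 2) /\ injective ends.

Definition degree (N K' : nat) (ends : 'I_K' -> {set 'I_N}) (v : 'I_N) : nat :=
  #|[set s | v \in ends s]|.

Definition max_degree (N K' : nat) (ends : 'I_K' -> {set 'I_N}) : nat :=
  \max_(v : 'I_N) degree ends v.

Definition is_matching (N K' : nat) (ends : 'I_K' -> {set 'I_N}) (M : {set 'I_K'}) : bool :=
  [forall s in M, forall t in M, (s != t) ==> [disjoint ends s & ends t]].

Definition matching_number (N K' : nat) (ends : 'I_K' -> {set 'I_N}) : nat :=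
  \max_(M : {set 'I_K'} | is_matching ends M) #|M|.

(* file W_{s,t} is indexed by (s,t) : 'I_K' * 'I_r *)
Definition fidx (K' r : nat) := ('I_K' * 'I_r)%type.
Definition files (K' r L : nat) := {ffun fidx K' r -> 'rV['F_2]_L}.

(* W_{S_i}: the files stored on server i (other coordinates blanked to 0) *)
Definition stored_at (N K' r L : nat) (ends : 'I_K' -> {set 'I_N}) (i : 'I_N)
  (w : files K' r L) : files K' r L :=
  [ffun k => if i \in ends k.1 then w k else 0].

Definition jointP {R : realType} (K' r L : nat) (U : finType) (pU : U -> R)
  (o : U * files K' r L) : R :=
  pU o.1 / #|{: files K' r L}|%:R.

(* A scheme: user randomness u ~ pU; query to server i for desired index th is
   q th i u; answer of server i is ans i (query) (files), depending only on the
   files stored on server i. *)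
Definition PIR_scheme {R : realType} (N K' r : nat) (ends : 'I_K' -> {set 'I_N}) (L : nat)
  (U : finType) (pU : U -> R) (Qt At : finType)
  (q : fidx K' r -> 'I_N -> U -> Qt) (ans : 'I_N -> Qt -> files K' r L -> At) : Prop :=
  [/\ (forall u, 0 <= pU u),
      \sum_u pU u = 1,
      (forall i qv (w w' : files K' r L),
          (forall k, i \in ends k.1 -> w k = w' k) -> ans i qv w = ans i qv w'),
      (forall th, cond_entropy (jointP pU) (fun o => o.2 th)
          (fun o => ([ffun i => ans i (q th i o.1) o.2], [ffun i => q th i o.1])) = 0) &
      (forall i th th' x,
          pmf (jointP pU) (fun o => (q th i o.1, ans i (q th i o.1) o.2, stored_at ends i o.2)) x
        = pmf (jointP pU) (fun o => (q th' i o.1, ans i (q th' i o.1) o.2, stored_at ends i o.2)) x)].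

(* rate L / sum_i H(A_i) (H(A_i) computed for desired index th; by privacy it
   does not depend on th) *)
Definition PIR_rate {R : realType} (N K' r : nat) (L : nat) (U : finType) (pU : U -> R)
  (Qt At : finType) (q : fidx K' r -> 'I_N -> U -> Qt)
  (ans : 'I_N -> Qt -> files K' r L -> At) (th : fidx K' r) : R :=
  L%:R / \sum_(i : 'I_N) entropy (jointP pU) (fun o => ans i (q th i o.1) o.2).

Definition PIR_capacity (R : realType) (N K' : nat) (ends : 'I_K' -> {set 'I_N}) (r : nat)
  : \bar R :=
  ereal_sup [set x : \bar R | exists (L : nat) (U : finType) (pU : U -> R)
      (Qt At : finType) (q : fidx K' r -> 'I_N -> U -> Qt)
      (ans : 'I_N -> Qt -> files K' r L -> At) (th : fidx K' r),
      [/\ (0 < L)%N, PIR_scheme ends pU q ans & x = (PIR_rate pU q ans th)%:E]].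

(* Fix an edge e = {a, b} of G, let C_k consist of the files off that edge and the
   first k files on it, and let Q be all queries.  For the desired file
   W_(e,k) put x_k = H(A_a, A_b | C_k, Q).  Reliability and the independence of
   the files from the queries give x_k >= L + H(A_a, A_b | C_(k+1), Q), and the
   latter is at least the mean of y_i = H(A_i | C_(k+1), Q_i), i = a, b.  By
   privacy y_i does not depend on the desired index, so it may be taken to be
   W_(e,k+1), whence y_a + y_b >= x_(k+1).  Thus x_k >= L + x_(k+1)/2 and
   x_(r-1) >= L, so H(A_a) + H(A_b) >= x_0 >= L (2 - 2^(1-r)).  Summing over all
   edges counts each server at most Delta(G) times, and summing over a maximum
   matching counts each server at most once. *)

From HB Require Import structures.
From mathcomp Require Import all_boot all_order all_algebra.
From mathcomp Require Import classical_sets reals ereal exp.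
From mathcomp Require Import ring lra.
Import Order.TTheory GRing.Theory Num.Theory.
Local Open Scope ring_scope.
Set Implicit Arguments. Unset Strict Implicit. Unset Printing Implicit Defensive.

Lemma ln2_gt0 (R : realType) : 0 < ln (2 : R).
Proof. by apply: ln_gt0; rewrite ltr1n. Qed.

Lemma ln_le_subr1 (R : realType) (x : R) : 0 < x -> ln x <= x - 1.
Proof.
move=> x_gt0; have := @le_ln1Dx R (x - 1); rewrite addrCA subrr addr0; apply.
by rewrite ltrBrDl subrr.
Qed.

Lemma geometric_lower_bound (R : realFieldType) (L : R) (x : nat -> R) n :
  L <= x n -> (forall k, (k < n)%N -> L + x k.+1 / 2 <= x k) ->
  L * (2 - (2 ^+ n)^-1) <= x 0%N.
Proof.
elim: n x => [|n IHn] x x_n x_step; first by rewrite expr0 invr1; lra.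
have := IHn (fun k => x k.+1) x_n (fun k lt_kn => x_step k.+1 lt_kn).
have := x_step 0%N (ltn0Sn n).
rewrite exprS invfM; nra.
Qed.

Lemma pmf_comp (R : realType) (Om T T' : finType) (P : Om -> R) (X : Om -> T)
    (g : T -> T') t :
  pmf P (fun o => g (X o)) t = \sum_(x | g x == t) pmf P X x.
Proof.
rewrite /pmf (partition_big X (fun x => g x == t)) /=; last by move=> o.
apply: eq_bigr => x /eqP gx; apply: eq_bigl => o.
by apply/idP/idP => [/andP[_ //]|/eqP Xo]; rewrite Xo gx !eqxx.
Qed.

Lemma eq_entropy_pmf (R : realType) (Om Om' T : finType) (P : Om -> R) (P' : Om' -> R)
    (X : Om -> T) (X' : Om' -> T) :
  pmf P X =1 pmf P' X' -> entropy P X = entropy P' X'.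
Proof. by move=> eqX; rewrite /entropy; congr (- _); apply: eq_bigr => t _; rewrite eqX. Qed.

Section FiniteEntropy.
Variables (R : realType) (Om : finType) (P : Om -> R).
Hypothesis P_ge0 : forall o, 0 <= P o.
Hypothesis P_sum1 : \sum_o P o = 1.

Local Notation H := (entropy P).

Definition determined_by (T T' : Type) (X : Om -> T) (Y : Om -> T') :=
  forall o o', Y o = Y o' -> X o = X o'.

Lemma pmf_ge0 (T : finType) (X : Om -> T) t : 0 <= pmf P X t.
Proof. exact: sumr_ge0. Qed.

Lemma pmf_le1 (T : finType) (X : Om -> T) t : pmf P X t <= 1.
Proof.
rewrite /pmf -P_sum1 [leRHS](bigID (fun o => X o == t)) /= lerDl.
exact: sumr_ge0.
Qed.

Lemma pmf_ge_prob (T : finType) (X : Om -> T) o : P o <= pmf P X (X o).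
Proof. by rewrite /pmf (bigD1 o) //= lerDl; apply: sumr_ge0. Qed.

Lemma pmf_gt0 (T : finType) (X : Om -> T) o : 0 < P o -> 0 < pmf P X (X o).
Proof. by move=> Po_gt0; apply: lt_le_trans Po_gt0 (pmf_ge_prob X o). Qed.

Lemma pmf_le_determined (T T' : finType) (X : Om -> T) (Y : Om -> T') o :
  determined_by X Y -> pmf P Y (Y o) <= pmf P X (X o).
Proof.
move=> XY; rewrite /pmf [leRHS]big_mkcond [leLHS]big_mkcond /=.
apply: ler_sum => o' _.
by case: eqP => [/esym/XY ->|_]; [rewrite eqxx | case: ifP].
Qed.

Lemma sum_prob_comp (T : finType) (X : Om -> T) (g : T -> R) :
  \sum_o P o * g (X o) = \sum_t pmf P X t * g t.
Proof.
rewrite (partition_big X predT) //=; apply: eq_bigr => t _.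
by rewrite /pmf big_distrl /=; apply: eq_bigr => o /eqP <-.
Qed.

Lemma sum_pmf (T : finType) (X : Om -> T) : \sum_t pmf P X t = 1.
Proof.
have := sum_prob_comp X (fun _ => 1).
under eq_bigr do rewrite mulr1; under [in RHS]eq_bigr do rewrite mulr1.
by move=> <-.
Qed.

Lemma sum_pmf_pairl (T T' : finType) (X : Om -> T) (Z : Om -> T') z :
  \sum_x pmf P (fun o => (X o, Z o)) (x, z) = pmf P Z z.
Proof.
rewrite /pmf (partition_big X predT) //=; apply: eq_bigr => x _.
by apply: eq_bigl => o; rewrite xpair_eqE andbC.
Qed.

Lemma entropyE (T : finType) (X : Om -> T) :
  H X = - (\sum_o P o * ln (pmf P X (X o))) / ln 2.
Proof.
rewrite (sum_prob_comp X (fun t => ln (pmf P X t))) /entropy mulNr; congr (- _).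
rewrite big_distrl /=; apply: eq_bigr => t _.
by case: eqP => [->|_]; rewrite ?mul0r // /log2 mulrA.
Qed.

Lemma entropy_ge0 (T : finType) (X : Om -> T) : 0 <= H X.
Proof.
rewrite entropyE mulNr oppr_ge0 pmulr_lle0 ?invr_gt0 ?ln2_gt0 //.
apply: sumr_le0 => o _.
have [->|Po_neq0] := eqVneq (P o) 0; first by rewrite mul0r.
have Po_gt0 : 0 < P o by rewrite lt_def Po_neq0 P_ge0.
by rewrite pmulr_rle0 // ln_le0 // pmf_le1.
Qed.

Lemma entropy_determined_le (T T' : finType) (X : Om -> T) (Y : Om -> T') :
  determined_by X Y -> H X <= H Y.
Proof.
move=> XY; rewrite !entropyE ler_pM2r ?invr_gt0 ?ln2_gt0 // lerN2.
apply: ler_sum => o _.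
have [->|Po_neq0] := eqVneq (P o) 0; first by rewrite !mul0r.
have Po_gt0 : 0 < P o by rewrite lt_def Po_neq0 P_ge0.
by rewrite ler_wpM2l ?P_ge0 // ler_ln ?pmf_le_determined // posrE pmf_gt0.
Qed.

Lemma entropy_determined_eq (T T' : finType) (X : Om -> T) (Y : Om -> T') :
  determined_by X Y -> determined_by Y X -> H X = H Y.
Proof. by move=> XY YX; apply/eqP; rewrite eq_le !entropy_determined_le. Qed.

Lemma eq_entropy (T : finType) (X Y : Om -> T) : X =1 Y -> H X = H Y.
Proof. by move=> eqXY; apply: entropy_determined_eq => o o'; rewrite !eqXY. Qed.

Lemma entropy_pairC (T T' : finType) (X : Om -> T) (Y : Om -> T') :
  H (fun o => (X o, Y o)) = H (fun o => (Y o, X o)).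
Proof. by apply: entropy_determined_eq => o o' [-> ->]. Qed.

Lemma entropy_pair_indep (T T' : finType) (X : Om -> T) (Y : Om -> T') :
  (forall x y, pmf P (fun o => (X o, Y o)) (x, y) = pmf P X x * pmf P Y y) ->
  H (fun o => (X o, Y o)) = H X + H Y.
Proof.
move=> pmfXY; rewrite !entropyE -mulrDl -opprD -big_split /=; congr (- _ / _).
apply: eq_bigr => o _.
have [->|Po_neq0] := eqVneq (P o) 0; first by rewrite !mul0r addr0.
have Po_gt0 : 0 < P o by rewrite lt_def Po_neq0 P_ge0.
by rewrite -mulrDr pmfXY lnM // posrE pmf_gt0.
Qed.

Section Submodularity.
Variables (T1 T2 T3 : finType) (X : Om -> T1) (Y : Om -> T2) (Z : Om -> T3).

Let pXZ := pmf P (fun o => (X o, Z o)).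
Let pYZ := pmf P (fun o => (Y o, Z o)).
Let pXYZ := pmf P (fun o => (X o, Y o, Z o)).
Let pZ := pmf P Z.

(* The expectation of [p(x,z) p(y,z) / (p(x,y,z) p(z))] is at most 1: summing
   over the support of [p(x,y,z)] gives at most [sum_z p(z) = 1]. *)
Lemma expect_submod_ratio_le1 :
  \sum_o P o * (pXZ (X o, Z o) * pYZ (Y o, Z o) / (pXYZ (X o, Y o, Z o) * pZ (Z o)))
  <= 1.
Proof.
pose g (v : T1 * T2 * T3) := pXZ (v.1.1, v.2) * pYZ (v.1.2, v.2) / (pXYZ v * pZ v.2).
pose h (v : T1 * T2 * T3) := pXZ (v.1.1, v.2) * pYZ (v.1.2, v.2) / pZ v.2.
rewrite (sum_prob_comp (fun o => (X o, Y o, Z o)) g) -/pXYZ.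
apply: (@le_trans _ _ (\sum_v h v)).
  apply: ler_sum => v _; rewrite /g /h.
  have [->|pv_neq0] := eqVneq (pXYZ v) 0.
    by rewrite mul0r divr_ge0 ?mulr_ge0 ?pmf_ge0.
  by rewrite invfM mulrCA (mulrA (pXYZ v)) mulfV // mul1r.
have -> : \sum_v h v = \sum_z pZ z.
  rewrite -(pair_bigA _ (fun a z => h (a, z))) /=.
  rewrite -(pair_bigA _ (fun x y => \sum_z h (x, y, z))) /=.
  under eq_bigr do rewrite exchange_big /=.
  rewrite exchange_big /=; apply: eq_bigr => z _.
  transitivity ((\sum_x pXZ (x, z)) * (\sum_y pYZ (y, z)) / pZ z).
    rewrite !mulr_suml; apply: eq_bigr => x _.
    by rewrite mulr_sumr mulr_suml.
  rewrite /pXZ /pYZ !sum_pmf_pairl -/pZ.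
  have [->|pz_neq0] := eqVneq (pZ z) 0; first by rewrite !mul0r.
  by rewrite mulfK.
by rewrite sum_pmf.
Qed.

Lemma entropy_submod :
  H (fun o => (X o, Y o, Z o)) + H Z <=
  H (fun o => (X o, Z o)) + H (fun o => (Y o, Z o)).
Proof.
rewrite !entropyE -!mulrDl ler_pM2r ?invr_gt0 ?ln2_gt0 // -!opprD lerN2.
rewrite -subr_le0 -!big_split -sumrB /=.
apply: (@le_trans _ _ (\sum_o P o *
    (pXZ (X o, Z o) * pYZ (Y o, Z o) / (pXYZ (X o, Y o, Z o) * pZ (Z o)) - 1))).
  apply: ler_sum => o _.
  have [->|Po_neq0] := eqVneq (P o) 0; first by rewrite !mul0r subrr.
  have Po_gt0 : 0 < P o by rewrite lt_def Po_neq0 P_ge0.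
  have := pmf_gt0 (fun o => (X o, Z o)) Po_gt0.
  have := pmf_gt0 (fun o => (Y o, Z o)) Po_gt0.
  have := pmf_gt0 (fun o => (X o, Y o, Z o)) Po_gt0.
  have := pmf_gt0 Z Po_gt0.
  rewrite -/pXZ -/pYZ -/pXYZ -/pZ => pz pxyz pyz pxz.
  rewrite -!mulrDr -mulrBr ler_wpM2l ?P_ge0 //.
  have -> : ln (pXZ (X o, Z o)) + ln (pYZ (Y o, Z o))
            - (ln (pXYZ (X o, Y o, Z o)) + ln (pZ (Z o)))
          = ln (pXZ (X o, Z o) * pYZ (Y o, Z o) / (pXYZ (X o, Y o, Z o) * pZ (Z o))).
    by rewrite ln_div ?posrE ?mulr_gt0 // !lnM ?posrE //; lra.
  by apply: ln_le_subr1; rewrite divr_gt0 ?mulr_gt0.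
under eq_bigr do rewrite mulrBr mulr1.
by rewrite sumrB P_sum1 subr_le0 expect_submod_ratio_le1.
Qed.

End Submodularity.

Lemma entropy_subadd (T T' : finType) (X : Om -> T) (Y : Om -> T') :
  H (fun o => (X o, Y o)) <= H X + H Y.
Proof.
have := entropy_submod X Y (fun _ => tt).
have -> : H (fun o => (X o, Y o, tt)) = H (fun o => (X o, Y o)).
  by apply: entropy_determined_eq => o o' [-> ->].
have eq_unit (T0 : finType) (V : Om -> T0) : H (fun o => (V o, tt)) = H V.
  by apply: entropy_determined_eq => o o'; [move=> -> | case].
rewrite !eq_unit; have := entropy_ge0 (fun _ => tt); lra.
Qed.

Lemma cond_entropy_ge0 (T T' : finType) (X : Om -> T) (Y : Om -> T') :
  0 <= cond_entropy P X Y.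
Proof. by rewrite subr_ge0; apply: entropy_determined_le => o o' [_ ->]. Qed.

Lemma cond_entropy_le_entropy (T T' : finType) (X : Om -> T) (Y : Om -> T') :
  cond_entropy P X Y <= H X.
Proof. by rewrite /cond_entropy lerBlDr entropy_subadd. Qed.

Lemma le_cond_entropy (T T' T'' : finType) (X : Om -> T) (Y : Om -> T') (Y' : Om -> T'') :
  determined_by Y' Y -> cond_entropy P X Y <= cond_entropy P X Y'.
Proof.
move=> Y'Y; have := entropy_submod X Y Y'.
have -> : H (fun o => (X o, Y o, Y' o)) = H (fun o => (X o, Y o)).
  apply: entropy_determined_eq => o o'; last by case=> -> ->.
  by case=> -> eqY; rewrite (Y'Y _ _ eqY) eqY.
have -> : H (fun o => (Y o, Y' o)) = H Y.
  apply: entropy_determined_eq => o o'; last by case=> ->.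
  by move=> eqY; rewrite (Y'Y _ _ eqY) eqY.
rewrite /cond_entropy; lra.
Qed.

Lemma cond_entropy_determined_le (T T' T'' : finType) (X : Om -> T) (X' : Om -> T')
    (Y : Om -> T'') :
  determined_by X X' -> cond_entropy P X Y <= cond_entropy P X' Y.
Proof.
by move=> XX'; rewrite lerD2r; apply: entropy_determined_le => o o' [/XX' -> ->].
Qed.

Lemma cond_entropy_pair_le (T T' T'' : finType) (X : Om -> T) (X' : Om -> T')
    (Y : Om -> T'') :
  cond_entropy P (fun o => (X o, X' o)) Y <= cond_entropy P X Y + cond_entropy P X' Y.
Proof. by have := entropy_submod X X' Y; rewrite /cond_entropy; lra. Qed.

End FiniteEntropy.

Section PIR.
Variables (R : realType) (N K' r L : nat) (ends : 'I_K' -> {set 'I_N}) (U : finType)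
  (pU : U -> R) (Qt At : finType) (q : fidx K' r -> 'I_N -> U -> Qt)
  (ans : 'I_N -> Qt -> files K' r L -> At).
Hypothesis pU_ge0 : forall u, 0 <= pU u.
Hypothesis pU_sum1 : \sum_u pU u = 1.

Local Notation Om := (U * files K' r L)%type.
Local Notation P := (@jointP R K' r L U pU).
Local Notation H := (@entropy R Om _ P).

Lemma jointP_ge0 (o : Om) : 0 <= P o.
Proof. by rewrite /jointP divr_ge0 ?pU_ge0. Qed.

Lemma jointP_sum1 : \sum_(o : Om) P o = 1.
Proof.
rewrite -pU_sum1 -(pair_bigA _ (fun u w => P (u, w))) /=.
apply: eq_bigr => u _; rewrite /jointP /= sumr_const -mulrnAr -mulr_natl mulfV ?mulr1 //.
by rewrite pnatr_eq0 -lt0n; apply/card_gt0P; exists 0.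
Qed.

Local Notation Hdet_eq := (entropy_determined_eq jointP_ge0).

(* Exchanging the files outside [S] between two outcomes is a measure-preserving
   involution of [Om * Om]; this is what makes the files independent. *)
Definition mix (S : pred (fidx K' r)) (o o' : Om) : Om :=
  (o.1, [ffun s => if S s then o.2 s else o'.2 s]).

Lemma mixK S o o' : mix S (mix S o o') (mix S o' o) = o.
Proof.
case: o => u w; rewrite /mix /=; congr (_, _); apply/ffunP => s; rewrite !ffunE.
by case: (S s).
Qed.

Lemma entropy_indep_files (T T' : finType) (S : pred (fidx K' r)) (X : Om -> T)
    (Y : Om -> T') :
  (forall o o' : Om, o.1 = o'.1 -> (forall s, S s -> o.2 s = o'.2 s) -> X o = X o') ->
  (forall o o' : Om, (forall s, ~~ S s -> o.2 s = o'.2 s) -> Y o = Y o') ->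
  H (fun o => (X o, Y o)) = H X + H Y.
Proof.
move=> X_loc Y_loc; apply: (entropy_pair_indep jointP_ge0) => x y.
have X_mix (o o' : Om) : X (mix S o o') = X o.
  by apply: X_loc => // s Ss; rewrite /mix /= ffunE Ss.
have Y_mix (o o' : Om) : Y (mix S o' o) = Y o.
  by apply: Y_loc => s Ss; rewrite /mix /= ffunE (negbTE Ss).
pose F (p : Om * Om) :=
  (if X p.1 == x then P p.1 else 0) * (if Y p.2 == y then P p.2 else 0).
pose phi (p : Om * Om) := (mix S p.1 p.2, mix S p.2 p.1).
have phiK : involutive phi by case=> o o'; rewrite /phi /= !mixK.
transitivity (\sum_p F (phi p)).
  rewrite /pmf big_mkcond /= -[LHS]mulr1 -jointP_sum1 big_distrl /=.
  rewrite -(pair_bigA _ (fun o o' => F (phi (o, o')))) /=.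
  apply: eq_bigr => o _; rewrite big_distrr /=; apply: eq_bigr => o' _.
  rewrite /F /phi /= X_mix Y_mix xpair_eqE.
  by case: (X o == x); case: (Y o == y); rewrite /= ?mul0r ?mulr0.
rewrite (reindex_inj (inv_inj phiK)) /=.
under eq_bigr do rewrite phiK.
rewrite -(pair_bigA _ (fun o o' => F (o, o'))) /=.
rewrite /pmf [X in _ * X]big_mkcond [X in X * _]big_mkcond big_distrl /=.
by apply: eq_bigr => o _; rewrite big_distrr.
Qed.

Lemma entropy_indep_user_files (T T' : finType) (X : Om -> T) (Y : Om -> T') :
  (forall o o' : Om, o.1 = o'.1 -> X o = X o') ->
  (forall o o' : Om, o.2 = o'.2 -> Y o = Y o') ->
  H (fun o => (X o, Y o)) = H X + H Y.
Proof.
move=> X_user Y_files; apply: (entropy_indep_files (S := xpred0)) => [o o' eq1 _|o o' eq2].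
  exact: X_user.
by apply: Y_files; apply/ffunP => s; apply: eq2.
Qed.

Lemma entropy_file (th : fidx K' r) : H (fun o => o.2 th) = L%:R.
Proof.
pose W (o : Om) := o.2 th.
have shift_inj d : injective (fun o : Om =>
    (o.1, [ffun s => if s == th then o.2 s + d else o.2 s])).
  apply: (can_inj (g := fun o : Om =>
    (o.1, [ffun s => if s == th then o.2 s - d else o.2 s]))).
  case=> u w /=; congr (_, _); apply/ffunP => s; rewrite !ffunE.
  by case: eqP => _; rewrite ?addrK.
have pmfW_const v v' : pmf P W v = pmf P W v'.
  rewrite /pmf (reindex_inj (shift_inj (v - v'))) /=.
  apply: eq_bigl => o; rewrite /W /= ffunE eqxx.
  by rewrite addrA subr_eq [_ + v]addrC (inj_eq (addrI v)).
have card_vec : #|{: 'rV['F_2]_L}| = (2 ^ L)%N by rewrite card_mx card_Fp // mul1n.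
have pow_neq0 : ((2 ^ L)%:R : R) != 0 by rewrite pnatr_eq0 expn_eq0.
have pmfW v : pmf P W v = ((2 ^ L)%:R)^-1.
  have := sum_pmf jointP_sum1 W.
  rewrite (eq_bigr (fun=> pmf P W v)) => [|t _]; last exact: pmfW_const.
  rewrite sumr_const card_vec => sum1.
  by rewrite -[LHS](mulfK pow_neq0) mulr_natr sum1 mul1r.
rewrite /entropy (eq_bigr (fun t => pmf P W t * log2 (((2 ^ L)%:R : R)^-1))); last first.
  by move=> t _; rewrite -/W pmfW invr_eq0 (negbTE pow_neq0).
rewrite -big_distrl /= sum_pmf ?jointP_sum1 // mul1r /log2 lnV ?posrE ?ltr0n ?expn_gt0 // natrX lnXn //.
by rewrite mulNr opprK mulrnAl divff // gt_eqF // ln2_gt0.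
Qed.

Definition restrict (S : pred (fidx K' r)) (w : files K' r L) : files K' r L :=
  [ffun s => if S s then w s else 0].

Lemma restrict_eq S w w' : restrict S w = restrict S w' <-> (forall s, S s -> w s = w' s).
Proof.
split=> [eqr s Ss|eqw].
  by have := congr1 (fun f : files K' r L => f s) eqr; rewrite /restrict !ffunE Ss.
by apply/ffunP => s; rewrite /restrict !ffunE; case: ifP => // /eqw.
Qed.

Definition answer th i (o : Om) := ans i (q th i o.1) o.2.
Definition query th i (o : Om) := q th i o.1.
Definition queries th (o : Om) := [ffun i => q th i o.1].
Definition view th i (o : Om) := (q th i o.1, ans i (q th i o.1) o.2, stored_at ends i o.2).

Lemma queries_eq th o o' : queries th o = queries th o' -> forall i, query th i o = query th i o'.
Proof. by move=> eqQ i; have := congr1 (fun f : {ffun 'I_N -> Qt} => f i) eqQ; rewrite !ffunE. Qed.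

Hypothesis ans_local : forall i qv (w w' : files K' r L),
  (forall k, i \in ends k.1 -> w k = w' k) -> ans i qv w = ans i qv w'.
Hypothesis reliable : forall th, cond_entropy P (fun o => o.2 th)
  (fun o => ([ffun i => ans i (q th i o.1) o.2], [ffun i => q th i o.1])) = 0.
Hypothesis private : forall i th th' x,
  pmf P (fun o => (q th i o.1, ans i (q th i o.1) o.2, stored_at ends i o.2)) x
  = pmf P (fun o => (q th' i o.1, ans i (q th' i o.1) o.2, stored_at ends i o.2)) x.

Lemma entropy_view_priv th th' i (T : finType) (g : Qt * At * files K' r L -> T) :
  H (fun o => g (view th i o)) = H (fun o => g (view th' i o)).
Proof.
by apply: eq_entropy_pmf => t; rewrite !pmf_comp; apply: eq_bigr => v _; apply: private.
Qed.

Lemma entropy_answer_priv th th' i : H (answer th i) = H (answer th' i).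
Proof. exact: (entropy_view_priv th th' i (fun v => v.1.2)). Qed.

Section Edge.
Variables (e : 'I_K') (a b : 'I_N).
Hypothesis ends_e : ends e = [set a; b].

(* [side k] is C_k of the sketch above, [HAB (e, k) k] is x_k and [HA] is y_i. *)
Definition known (k : nat) (s : fidx K' r) := (s.1 != e) || (s.2 < k)%N.
Definition side k (o : Om) := restrict (known k) o.2.

Definition HAB th k := cond_entropy P (fun o => (answer th a o, answer th b o))
                                     (fun o => (side k o, queries th o)).
Definition HA th k i := cond_entropy P (answer th i) (fun o => (side k o, query th i o)).

Lemma known_mono k s : known k s -> known k.+1 s.
Proof. by rewrite /known => /orP[->//|lt_sk]; rewrite ltnS ltnW ?orbT. Qed.

Lemma known_succ (t : 'I_r) s : known t.+1 s -> ~~ known t s -> s = (e, t).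
Proof.
rewrite /known negb_or negbK => /orP[neq_e|lt_st] /andP[/eqP eq_e ge_st].
  by rewrite eq_e eqxx in neq_e.
case: s lt_st eq_e ge_st => s1 s2 /= lt_st -> ge_st; congr (_, _); apply: val_inj.
by apply/eqP; rewrite eqn_leq -ltnS lt_st leqNgt ge_st.
Qed.

Lemma side_succ_eq (t : 'I_r) o o' :
  side t.+1 o = side t.+1 o' <-> side t o = side t o' /\ o.2 (e, t) = o'.2 (e, t).
Proof.
have known_t : known t.+1 (e, t) by rewrite /known ltnSn orbT.
split=> [/restrict_eq eq_succ|[/restrict_eq eq_t eq_et]].
  by split; [apply/restrict_eq => s /known_mono /eq_succ | apply: eq_succ].
apply/restrict_eq => s known_s; have [known_ts|] := boolP (known t s).
  exact: eq_t.
by move/(known_succ known_s) ->.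
Qed.

Lemma HAB_le th k : HAB th k <= HA th k a + HA th k b.
Proof.
apply: le_trans (cond_entropy_pair_le jointP_ge0 jointP_sum1 _ _ _) _.
by apply: lerD; apply: (le_cond_entropy jointP_ge0 jointP_sum1) => o o' [-> /queries_eq ->].
Qed.

Lemma HAB0_le th : HAB th 0 <= H (answer th a) + H (answer th b).
Proof.
apply: le_trans (cond_entropy_le_entropy jointP_ge0 jointP_sum1 _ _) _.
exact: (entropy_subadd jointP_ge0 jointP_sum1 (answer th a) (answer th b)).
Qed.

(* Given the side information and [Q_i], the other queries carry no information
   about [A_i]: they depend only on the user's randomness, which is independent
   of the files. *)
Lemma HA_le_queries th k i :
  HA th k i <= cond_entropy P (answer th i) (fun o => (side k o, queries th o)).
Proof.
have := entropy_submod jointP_ge0 jointP_sum1 (fun o : Om => o.2) (queries th)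
  (fun o => (answer th i o, (side k o, query th i o))).
have -> : H (fun o => (o.2, queries th o, (answer th i o, (side k o, query th i o))))
        = H (fun o => (queries th o, o.2)).
  apply: Hdet_eq => o o' /=; last by case=> -> ->.
  case=> eqQ eq_files; move: (queries_eq eqQ i); rewrite /query => eqQi.
  by rewrite /answer /side eqQ eq_files eqQi.
have -> : H (fun o => (o.2, (answer th i o, (side k o, query th i o))))
        = H (fun o => (query th i o, o.2)).
  apply: Hdet_eq => o o' /=; last by case=> -> _ _ ->.
  by rewrite /answer /query /side; case=> eqQ ->; rewrite eqQ.
have -> : H (fun o => (queries th o, (answer th i o, (side k o, query th i o))))
        = H (fun o => (answer th i o, (side k o, queries th o))).
  apply: Hdet_eq => o o' /=; last by case=> -> -> -> _.
  by case=> -> -> eqQ; rewrite eqQ (queries_eq eqQ).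
have user_files (T : finType) (X : Om -> T) : (forall o o', o.1 = o'.1 -> X o = X o') ->
    H (fun o => (X o, o.2)) = H X + H (fun o => o.2).
  by move=> X_user; apply: entropy_indep_user_files.
have side_user (T : finType) (X : Om -> T) : (forall o o', o.1 = o'.1 -> X o = X o') ->
    H (fun o => (side k o, X o)) = H (side k) + H X.
  move=> X_user; rewrite (entropy_pairC jointP_ge0) addrC.
  by apply: entropy_indep_user_files => // o o' eq_files; rewrite /side eq_files.
have Q_user o o' : o.1 = o'.1 -> queries th o = queries th o' by rewrite /queries => ->.
have Qi_user o o' : o.1 = o'.1 -> query th i o = query th i o' by rewrite /query => ->.
rewrite /HA /cond_entropy (user_files _ _ Q_user) (user_files _ _ Qi_user).
rewrite (side_user _ _ Q_user) (side_user _ _ Qi_user); lra.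
Qed.

Lemma HA_view th k i :
  HA th k i = cond_entropy P (fun o => (view th i o).1.2)
    (fun o => (restrict (known k) (view th i o).2, (view th i o).1.1)).
Proof.
pose D (o : Om) := restrict (fun s => known k s && (i \in ends s.1)) o.2.
pose E (o : Om) := restrict (fun s => known k s && (i \notin ends s.1)) o.2.
have side_DE o o' : side k o = side k o' <-> D o = D o' /\ E o = E o'.
  split=> [/restrict_eq eq_side|[/restrict_eq eqD /restrict_eq eqE]].
    by split; apply/restrict_eq => s /andP[/eq_side].
  apply/restrict_eq => s known_s.
  by case: (boolP (i \in ends s.1)) => i_s; [apply: eqD | apply: eqE]; rewrite known_s.
have indep_E (T : finType) (X : Om -> T) :
    (forall o o' : Om, o.1 = o'.1 ->
       (forall s, i \in ends s.1 -> o.2 s = o'.2 s) -> X o = X o') ->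
    H (fun o => (X o, E o)) = H X + H E.
  move=> X_loc; apply: (entropy_indep_files (S := fun s => i \in ends s.1)) => // o o' eq_off.
  by apply/restrict_eq => s /andP[_ /eq_off].
have D_loc (o o' : Om) : (forall s, i \in ends s.1 -> o.2 s = o'.2 s) -> D o = D o'.
  by move=> eq_on; apply/restrict_eq => s /andP[_ /eq_on].
have D_view (o : Om) : D o = restrict (known k) (view th i o).2.
  apply/ffunP => s; rewrite /restrict /stored_at !ffunE.
  by case: (known k s); case: (i \in ends s.1).
have joint_split : H (fun o => (answer th i o, (side k o, query th i o)))
    = H (fun o => (answer th i o, (D o, query th i o))) + H E.
  rewrite -indep_E.
    apply: Hdet_eq => o o' /=; first by case=> -> eqD -> eqE; congr (_, (_, _)); apply/side_DE.
    by case=> -> /side_DE[-> ->] ->.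
  move=> o o' eq_user eq_on; rewrite /answer /query eq_user (ans_local _ eq_on).
  by rewrite (D_loc _ _ eq_on).
have cond_split : H (fun o => (side k o, query th i o))
    = H (fun o => (D o, query th i o)) + H E.
  rewrite -indep_E.
    apply: Hdet_eq => o o' /=; first by case=> eqD -> eqE; congr (_, _); apply/side_DE.
    by case=> /side_DE[-> ->] ->.
  by move=> o o' eq_user eq_on; rewrite /query eq_user (D_loc _ _ eq_on).
rewrite /HA /cond_entropy joint_split cond_split opprD addrACA subrr addr0.
by congr (_ - _); apply: (eq_entropy jointP_ge0) => o; rewrite D_view.
Qed.

Lemma HA_priv th th' k i : HA th k i = HA th' k i.
Proof.
rewrite !HA_view /cond_entropy.
rewrite (entropy_view_priv th th' i (fun v => (v.1.2, (restrict (known k) v.2, v.1.1)))).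
by rewrite (entropy_view_priv th th' i (fun v => (restrict (known k) v.2, v.1.1))).
Qed.

(* [W_(e,t)] is a function of [side t], [A_a], [A_b] and the queries (reliability
   plus locality of the other answers), and is independent of [side t] and the
   queries. *)
Lemma HAB_succ (t : 'I_r) : L%:R + HAB (e, t) t.+1 <= HAB (e, t) t.
Proof.
set th := (e, t).
pose W (o : Om) := o.2 th.
pose Z (o : Om) := (answer th a o, answer th b o, (side t o, queries th o)).
pose Y (o : Om) := ([ffun i => ans i (q th i o.1) o.2], [ffun i => q th i o.1]).
have Y_Z : determined_by Y Z.
  move=> o o' [eqA eqB /restrict_eq eq_side eqQ]; congr (_, _); last exact: eqQ.
  apply/ffunP => j; rewrite !ffunE.
  have [->|neq_a] := eqVneq j a; first exact: eqA.
  have [->|neq_b] := eqVneq j b; first exact: eqB.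
  move: (queries_eq eqQ j); rewrite /query => ->.
  apply: ans_local => s s_j; apply: eq_side; apply/orP; left.
  by apply: contraTneq s_j => ->; rewrite ends_e !inE negb_or neq_a neq_b.
have := entropy_submod jointP_ge0 jointP_sum1 W Z Y.
have -> : H (fun o => (W o, Z o, Y o)) = H (fun o => (W o, Z o)).
  apply: Hdet_eq => o o'; last by move/(congr1 fst).
  by move=> /= eqWZ; rewrite eqWZ (Y_Z _ _ (congr1 snd eqWZ)).
have -> : H (fun o => (Z o, Y o)) = H Z.
  apply: Hdet_eq => o o'; last by move/(congr1 fst).
  by move=> eqZ; rewrite /= eqZ (Y_Z _ _ eqZ).
have -> : H (fun o => (W o, Z o))
        = H (fun o => (answer th a o, answer th b o, (side t.+1 o, queries th o))).
  apply: Hdet_eq => o o' /=.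
    by case=> eqA eqB /side_succ_eq[eq_side eqW] eqQ; rewrite /W /Z eqA eqB eq_side eqW eqQ.
  case=> eqW eqA eqB eq_side eqQ.
  by rewrite eqA eqB eqQ (proj2 (side_succ_eq _ _ _) (conj eq_side eqW)).
have side_split : H (fun o => (side t.+1 o, queries th o))
        = H (fun o => (side t o, queries th o)) + H W.
  rewrite -(entropy_indep_files (S := fun s => s != th)).
  - apply: Hdet_eq => o o' /=.
      by case=> eq_side eqQ eqW; rewrite eqQ (proj2 (side_succ_eq _ _ _) (conj eq_side eqW)).
    by case=> /side_succ_eq[-> eqW] ->; rewrite /W eqW.
  - move=> o o' eq_user eq_files; rewrite /queries eq_user; congr (_, _).
    apply/restrict_eq => s known_s; apply: eq_files; apply: contraTneq known_s => ->.
    by rewrite /known /= eqxx ltnn.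
  - by move=> o o' eq_th; apply: eq_th; rewrite negbK.
have := reliable th; rewrite /HAB /cond_entropy /= side_split entropy_file; lra.
Qed.

Lemma HA_le_HAB th k i : i \in [set a; b] -> HA th k i <= HAB th k.
Proof.
move=> i_ab; apply: le_trans (HA_le_queries th k i) _.
apply: (cond_entropy_determined_le jointP_ge0) => o o' [eqA eqB].
by move: i_ab; rewrite !inE => /orP[] /eqP ->.
Qed.

Lemma HA_add_le_double_HAB th k : HA th k a + HA th k b <= 2 * HAB th k.
Proof.
have := @HA_le_HAB th k a; have := @HA_le_HAB th k b.
rewrite !inE !eqxx orbT; lra.
Qed.

Lemma edge_bound th : (0 < r)%N ->
  L%:R * (2 - (2 ^+ r.-1)^-1) <= H (answer th a) + H (answer th b).
Proof.
move=> r_gt0; pose tk (k : nat) : 'I_r := insubd (Ordinal r_gt0) k.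
have tkE k : (k < r)%N -> nat_of_ord (tk k) = k by move=> lt_kr; rewrite val_insubd lt_kr.
have last_ge : L%:R <= HAB (e, tk r.-1) r.-1.
  have := HAB_succ (tk r.-1); rewrite tkE ?prednK //.
  have := cond_entropy_ge0 jointP_ge0 (fun o => (answer (e, tk r.-1) a o, answer (e, tk r.-1) b o))
    (fun o => (side r o, queries (e, tk r.-1) o)).
  rewrite /HAB; lra.
have step k : (k < r.-1)%N -> L%:R + HAB (e, tk k.+1) k.+1 / 2 <= HAB (e, tk k) k.
  move=> lt_kr; have lt_Skr : (k.+1 < r)%N by rewrite -ltn_predRL.
  have := HAB_succ (tk k); rewrite tkE ?(ltn_trans _ lt_Skr) //.
  have := HAB_le (e, tk k.+1) k.+1; have := HA_add_le_double_HAB (e, tk k) k.+1.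
  rewrite (HA_priv (e, tk k.+1) (e, tk k)) (HA_priv (e, tk k.+1) (e, tk k) _ b); lra.
apply: le_trans (geometric_lower_bound (x := fun k => HAB (e, tk k) k) last_ge step) _.
by rewrite -!(entropy_answer_priv (e, tk 0)) HAB0_le.
Qed.

End Edge.
End PIR.

Section Graph.
Variables (R : numDomainType) (N K' : nat) (ends : 'I_K' -> {set 'I_N}).
Variables (h : 'I_N -> R) (x : R).
Hypothesis h_ge0 : forall i, 0 <= h i.
Hypothesis edge_ge : forall s, x <= \sum_(i in ends s) h i.

Lemma sum_edges_ends (A : {set 'I_K'}) :
  \sum_(s in A) \sum_(i in ends s) h i = \sum_i #|[set s in A | i \in ends s]|%:R * h i.
Proof.
under eq_bigr do rewrite big_mkcond /=.
rewrite exchange_big /=; apply: eq_bigr => i _.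
rewrite -big_mkcondr /= mulr_natl -sumr_const; apply: eq_bigl => s.
by rewrite inE.
Qed.

Lemma sum_edges_ge (A : {set 'I_K'}) : #|A|%:R * x <= \sum_(s in A) \sum_(i in ends s) h i.
Proof. by rewrite mulr_natl -sumr_const; apply: ler_sum => s _; apply: edge_ge. Qed.

Lemma max_degree_bound : K'%:R * x <= (max_degree ends)%:R * \sum_i h i.
Proof.
have := sum_edges_ge [set: 'I_K']; rewrite cardsT card_ord => /le_trans; apply.
rewrite sum_edges_ends mulr_sumr; apply: ler_sum => i _.
rewrite ler_wpM2r // ler_nat; apply: leq_trans (leq_bigmax i).
by apply/eq_leq/eq_card => s; rewrite !inE.
Qed.

Lemma matching_bound M : is_matching ends M -> #|M|%:R * x <= \sum_i h i.
Proof.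
move=> M_matching; apply: le_trans (sum_edges_ge M) _.
rewrite sum_edges_ends; apply: ler_sum => i _.
rewrite -[leRHS]mul1r ler_wpM2r // lern1.
apply/card_le1_eqP => s t; rewrite !inE => /andP[sM i_s] /andP[tM i_t].
apply/eqP; apply: contraT; rewrite eq_sym => neq_st.
move/forall_inP: M_matching => /(_ s sM) /forall_inP /(_ t tM) /implyP /(_ neq_st).
by move/disjointFr/(_ i_s); rewrite i_t.
Qed.

Lemma matching_number_bound : (matching_number ends)%:R * x <= \sum_i h i.
Proof.
rewrite /matching_number.
have [|M M_matching ->] := @eq_bigmax_cond _ (is_matching ends) (fun M => #|M|).
  by apply/card_gt0P; exists finset.set0; apply/forall_inP => s; rewrite inE.
exact: matching_bound.
Qed.

End Graph.

Lemma matching_number_gt0 (N K' : nat) (ends : 'I_K' -> {set 'I_N}) :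
  (0 < K')%N -> (0 < matching_number ends)%N.
Proof.
move=> K'_gt0; pose s0 : 'I_K' := Ordinal K'_gt0.
have s0_matching : is_matching ends [set s0].
  by apply/forall_inP => s /set1P ->; apply/forall_inP => t /set1P ->; rewrite eqxx.
by have := @leq_bigmax_cond _ (is_matching ends) (fun M => #|M|) _ s0_matching; rewrite cards1.
Qed.

Lemma rate_le_min (R : realFieldType) (L S c K D nu : R) :
  0 < L -> 0 < c -> 0 < K -> 0 < nu ->
  K * (L * c) <= D * S -> nu * (L * c) <= S ->
  L / S <= Num.min (D / K) nu^-1 / c.
Proof.
move=> L_gt0 c_gt0 K_gt0 nu_gt0 deg_bound match_bound.
have S_gt0 : 0 < S by apply: lt_le_trans match_bound; rewrite !mulr_gt0.
rewrite ler_pdivlMr // le_min; apply/andP; split.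
- rewrite ler_pdivlMr //.
  have -> : L / S * c * K = K * (L * c) / S by field; rewrite gt_eqF.
  by rewrite ler_pdivrMr.
- rewrite -[leRHS]div1r ler_pdivlMr //.
  have -> : L / S * c * nu = nu * (L * c) / S by field; rewrite gt_eqF.
  by rewrite ler_pdivrMr // mul1r.
Qed.

Lemma two_sub_invX_gt0 (R : realFieldType) n : 0 < 2 - ((2 : R) ^+ n)^-1.
Proof.
have : ((2 : R) ^+ n)^-1 <= 1 by rewrite invf_le1 ?exprn_ege1 ?exprn_gt0 ?ler1n.
lra.
Qed.

Theorem theorem2 (R : realType) (N K' r : nat) (ends : 'I_K' -> {set 'I_N}) :
  simple_graph ends -> (0 < K')%N -> (1 <= r)%N ->
  (PIR_capacity R ends r <=
   ((Num.min ((max_degree ends)%:R / K'%:R) ((matching_number ends)%:R^-1))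
      / (2 - (2 ^+ r.-1)^-1))%:E)%E.
Proof.
move=> [ends2 _] K'_gt0 r_gt0.
apply: ge_ereal_sup => _ [L [U [pU [Qt [At [q [ans [th [L_gt0 scheme ->]]]]]]]]].
case: scheme => pU_ge0 pU_sum1 ans_local reliable private.
have edge s : L%:R * (2 - (2 ^+ r.-1)^-1)
    <= \sum_(i in ends s) entropy (jointP pU) (fun o => ans i (q th i o.1) o.2).
  have /eqP/cards2P[a [b [neq_ab ends_s]]] := ends2 s.
  rewrite ends_s big_setU1 ?inE //= big_set1.
  exact: (edge_bound pU_ge0 pU_sum1 ans_local reliable private ends_s th r_gt0).
have H_ge0 i : 0 <= entropy (jointP pU) (fun o => ans i (q th i o.1) o.2).
  by apply: entropy_ge0; [apply: jointP_ge0 | apply: jointP_sum1].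
rewrite lee_fin; apply: rate_le_min.
- by rewrite ltr0n.
- exact: two_sub_invX_gt0.
- by rewrite ltr0n.
- by rewrite ltr0n matching_number_gt0.
- exact: max_degree_bound.
- exact: matching_number_bound.
Qed.
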